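(* For any simplicial model $\mathcal{C}=(\mathcal{V},C,\chi,\ell)$, $\mathtt{LEM}(\mathcal{C})$ is a proper local epistemic model such that for every facet $F\in\mathcal{F}(C)$ and every sentence $\alpha$, $\mathcal{C},F\Vdash\alpha$ iff $\mathtt{LEM}(\mathcal{C}),F\vDash\alpha$. For any local epistemic model $\mathcal{M}=(W,\delta,\{R_a\}_{a\in\mathbf{A}},\rho)$, $\mathtt{SC}(\mathcal{M})$ is a simplicial model whose set of facets is $\{F^{\mathcal M}_w\mid w\in W\}$, and for every $w\in W$ and every sentence $\alpha$, $\mathcal{M},w\vDash\alpha$ iff $\mathtt{SC}(\mathcal{M}),F^{\mathcal M}_w\Vdash\alpha$.
   Context: Fix a nonempty finite set $\mathbf{A}$ of agents, a countable set $\mathbf{X}$ of variables disjoint from $\mathbf{A}$, and a countable set $\mathbf{P}$ of predicate letters. Formulas of $\mathcal{L}$: $\phi ::= p_x \mid \top \mid \neg\phi \mid (\phi\wedge\phi) \mid [x:=a]\phi \mid \mathsf{K}_X\alpha$ ($p\in\mathbf{P}$, $x\in\mathbf{X}$, $a\in\mathbf{A}$, $X\subseteq\mathbf{X}$ finite possibly empty, $\alpha$ without free variables), with $FV(p_x)=\{x\}$, $FV(\top)=\emptyset$, $FV$ of $\neg,\wedge$ as usual, $FV([x:=a]\phi)=FV(\phi)\setminus\{x\}$, $FV(\mathsf{K}_X\alpha)=X$; sentences have no free variables. A simplicial model is $\mathcal{C}=(\mathcal{V},C,\chi,\ell)$: $\mathcal{V}\neq\emptyset$; $C\subseteq\wp(\mathcal{V})$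 with $\emptyset\notin C$, closed under nonempty subsets, containing all singletons; $\chi:\mathcal{V}\to\mathbf{A}$ injective on every member of $C$; $\ell:\mathbf{P}\to\wp(\mathcal{V})$; facets $\mathcal{F}(C)$ are the inclusion-maximal members of $C$. A first-order Kripke model is $\mathcal{M}=(W,\delta,\{R_a\}_{a\in\mathbf{A}},\rho)$: $W\neq\emptyset$, $\delta:W\to\wp(\mathbf{A})\setminus\{\emptyset\}$, $R_a\subseteq W\times W$ with $R_a(w)=\emptyset$ if $a\notin\delta(w)$, $\rho:\mathbf{P}\times W\to\wp(\mathbf{A})$ with $\rho(p,w)\subseteq\delta(w)$. Semantics, with assignments $\sigma:\mathbf{X}\to\mathbf{A}$ admissible ($\sigma[FV(\phi)]\subseteq\chi[F]$, resp. $\subseteq\delta(w)$), Booleans standard: $\mathcal{C},F,\sigma\Vdash p_x$ iff $\sigma(x)\in\chi[F\cap\ell(p)]$; $\mathcal{C},F,\sigma\Vdash[x:=a]\phi$ iff ($a\in\chi[F]$ implies $\mathcal{C},F,\sigma[x\mapsto a]\Vdash\phi$); $\mathcal{C},F,\sigma\Vdash\mathsf{K}_X\alpha$ iff $\mathcal{C},G,\sigma\Vdash\alpha$ for all $G\in\mathcal{F}(C)$ with $\sigma[X]\subseteq\chi[F\cap G]$. $\mathcal{M},w,\sigma\vDash p_x$ iff $\sigma(x)\in\rho(p,w)$; $\mathcal{M},w,\sigma\vDash[x:=a]\phi$ iff ($a\in\delta(w)$ implies $\mathcal{M},w,\sigma[x\mapsto a]\vDash\phi$); $\mathcal{M},w,\sigma\vDash\mathsf{K}_X\alpha$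 iff $\mathcal{M},v,\sigma\vDash\alpha$ for all $v\in\bigcap_{a\in\sigma[X]}R_a(w)$ (empty intersection $=W$). Truth of sentences does not depend on the assignment. $\mathcal{M}$ is a local epistemic model if: for each $a$ the restriction of $R_a$ to $\{w\mid a\in\delta(w)\}$ is an equivalence relation; $wR_av$ and $a\in\delta(w)$ imply $a\in\delta(v)$; $wR_av$ and $a\in\rho(p,w)$ imply $a\in\rho(p,v)$; $v\in\bigcap_{a\in\delta(w)}R_a(w)$ implies $\delta(v)\subseteq\delta(w)$. It is proper if additionally $\bigcap_{a\in\delta(w)}R_a(w)=\{w\}$ for all $w$. $\mathtt{LEM}(\mathcal{C})=(W^{\mathcal C},\delta^{\mathcal C},\{R^{\mathcal C}_a\},\rho^{\mathcal C})$ where $W^{\mathcal C}=\mathcal{F}(C)$, $\delta^{\mathcal C}(F)=\chi[F]$, $R^{\mathcal C}_a=\{(F,G)\mid a\in\chi[F\cap G]\}$, $\rho^{\mathcal C}(p,F)=\chi[F\cap\ell(p)]$. For a local epistemic model $\mathcal{M}$, let $[w]_a=R_a(w)$ and $F^{\mathcal M}_w=\{(a,[w]_a)\mid a\in\delta(w)\}$; $\mathtt{SC}(\mathcal{M})=(\mathcal{V}^{\mathcal M},C^{\mathcal M},\chi^{\mathcal M},\ell^{\mathcal M})$ where $\mathcal{V}^{\mathcal M}=\{(a,[w]_a)\mid w\in W, a\in\delta(w)\}$, $C^{\mathcal M}=\{X\subseteq\mathcal{V}^{\mathcal M}\mid X\neq\emptyset, X\subseteq F^{\mathcal M}_w\text{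 for some }w\in W\}$, $\chi^{\mathcal M}(a,[w]_a)=a$, and $\ell^{\mathcal M}(p)=\{(a,[w]_a)\mid a\in\rho(p,w)\}$. *)

From mathcomp Require Import all_boot.
Set Implicit Arguments. Unset Strict Implicit. Unset Printing Implicit Defensive.

Section Syntax.
Variables (A : finType) (X : countType) (P : countType).

(** Formulas of L.  K xs alpha : xs is a finite (possibly empty) set of variables. *)
Inductive form : Type :=
| FPred of P & X
| FTop
| FNeg of form
| FAnd of form & form
| FAssign of X & A & form
| FK of seq X & form.

Fixpoint fv (f : form) (y : X) : Prop :=
  match f with
  | FPred _ x => y = x
  | FTop => False
  | FNeg g => fv g y
  | FAnd g h => fv g y \/ fv h y
  | FAssign x _ g => fv g y /\ y <> x
  | FK xs _ => y \in xs
  end.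

Definition closedf (f : form) : Prop := forall y, ~ fv f y.

Fixpoint wf (f : form) : Prop :=
  match f with
  | FPred _ _ | FTop => True
  | FNeg g => wf g
  | FAnd g h => wf g /\ wf h
  | FAssign _ _ g => wf g
  | FK _ g => wf g /\ closedf g
  end.

Definition sentence (f : form) : Prop := wf f /\ closedf f.

Definition upd (s : X -> A) (x : X) (a : A) : X -> A :=
  fun y => if y == x then a else s y.

Definition img (V : Type) (chi : V -> A) (F : V -> Prop) : A -> Prop :=
  fun a => exists v, F v /\ chi v = a.

Section Simplicial.
Variables (V : Type) (C : (V -> Prop) -> Prop) (chi : V -> A) (lab : P -> V -> Prop).

Definition is_simplicial_model : Prop :=
  [/\ (exists v : V, True),
      (forall F, C F -> exists v, F v),
      (forall F G, C F -> (forall v, G v -> F v) -> (exists v, G v) -> C G),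
      (forall v, C (fun u => u = v)) &
      (forall F u v, C F -> F u -> F v -> chi u = chi v -> u = v)].

Definition facet (F : V -> Prop) : Prop :=
  C F /\ forall G, C G -> (forall v, F v -> G v) -> forall v, G v -> F v.

Fixpoint ssat (F : V -> Prop) (s : X -> A) (f : form) : Prop :=
  match f with
  | FPred p x => img chi (fun v => F v /\ lab p v) (s x)
  | FTop => True
  | FNeg g => ~ ssat F s g
  | FAnd g h => ssat F s g /\ ssat F s h
  | FAssign x a g => img chi F a -> ssat F (upd s x a) g
  | FK xs g => forall G, facet G ->
       (forall y, y \in xs -> img chi (fun v => F v /\ G v) (s y)) -> ssat G s g
  end.

(** truth of a sentence at F (does not depend on the assignment) *)
Definition ssat_sent (F : V -> Prop) (f : form) : Prop := forall s, ssat F s f.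
End Simplicial.

Section Kripke.
Variables (W : Type) (delta : W -> A -> Prop) (R : A -> W -> W -> Prop)
          (rho : P -> W -> A -> Prop).

Definition is_kripke_model : Prop :=
  [/\ (exists w : W, True),
      (forall w, exists a, delta w a),
      (forall a w v, R a w v -> delta w a) &
      (forall p w a, rho p w a -> delta w a)].

Definition is_local_epistemic : Prop :=
  [/\ is_kripke_model,
      (forall a, [/\ (forall w, delta w a -> R a w w),
                     (forall w v, delta w a -> delta v a -> R a w v -> R a v w) &
                     (forall w v u, delta w a -> delta v a -> delta u a ->
                                    R a w v -> R a v u -> R a w u)]),
      (forall a w v, R a w v -> delta w a -> delta v a),
      (forall a p w v, R a w v -> rho p w a -> rho p v a) &
      (forall w v, (forall a, delta w a -> R a w v) -> forall a, delta v a -> delta w a)].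

Definition is_proper : Prop :=
  forall w v, (forall a, delta w a -> R a w v) <-> v = w.

Fixpoint ksat (w : W) (s : X -> A) (f : form) : Prop :=
  match f with
  | FPred p x => rho p w (s x)
  | FTop => True
  | FNeg g => ~ ksat w s g
  | FAnd g h => ksat w s g /\ ksat w s h
  | FAssign x a g => delta w a -> ksat w (upd s x a) g
  | FK xs g => forall v, (forall y, y \in xs -> R (s y) w v) -> ksat v s g
  end.

Definition ksat_sent (w : W) (f : form) : Prop := forall s, ksat w s f.

Definition SCV : Type :=
  {p : A * (W -> Prop) | exists w, delta w p.1 /\ p.2 = R p.1 w}.

Definition SCfacet (w : W) : SCV -> Prop :=
  fun u => delta w (sval u).1 /\ (sval u).2 = R (sval u).1 w.

Definition SCC (S : SCV -> Prop) : Prop :=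
  (exists u, S u) /\ exists w, forall u, S u -> SCfacet w u.

Definition SCchi (u : SCV) : A := (sval u).1.

Definition SClab (p : P) (u : SCV) : Prop :=
  exists w, delta w (sval u).1 /\ (sval u).2 = R (sval u).1 w /\ rho p w (sval u).1.
End Kripke.

Section LEM.
Variables (V : Type) (C : (V -> Prop) -> Prop) (chi : V -> A) (lab : P -> V -> Prop).

Definition LEMW : Type := {F : V -> Prop | facet C F}.
Definition LEMdelta (F : LEMW) : A -> Prop := img chi (sval F).
Definition LEMR (a : A) (F G : LEMW) : Prop :=
  img chi (fun v => sval F v /\ sval G v) a.
Definition LEMrho (p : P) (F : LEMW) : A -> Prop :=
  img chi (fun v => sval F v /\ lab p v).
End LEM.

End Syntax.

(* In LEM(C) the worlds are the facets and two facets are a-related when they share their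
   a-coloured vertex; since colours are injective on simplices this is an equivalence, and
   a facet sharing every one of its vertices with a simplex is contained in it, hence equal
   to it by maximality, which gives properness.  In SC(M) the vertices are the pairs
   (a, [w]_a); the local epistemic conditions turn F_w sharing every vertex with F_v into
   F_w = F_v, so the F_w are exactly the facets.  In both directions the translation keeps
   the atoms and the agent sets, and turns "sharing the a-vertex" into R_a and back, so the
   truth lemma holds by structural induction for every formula and every assignment. *)
From mathcomp Require Import all_boot.
From mathcomp Require Import boolp zify.
Set Implicit Arguments. Unset Strict Implicit.

Section LEM.
Variables (A : finType) (X P : countType) (V : Type).
Variables (C : (V -> Prop) -> Prop) (chi : V -> A) (lab : P -> V -> Prop).

Local Notation LEMdelta := (@LEMdelta A V C chi).
Local Notation LEMR := (@LEMR A V C chi).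
Local Notation LEMrho := (@LEMrho A P V C chi lab).

Lemma ssat_LEM (f : form A X P) (F : LEMW C) s :
  ssat C chi lab (sval F) s f <-> ksat LEMdelta LEMR LEMrho F s f.
Proof.
elim: f F s => [p x || g IH | g IHg h IHh | x a g IH | xs g IH] F s //=.
- by split=> nH H; apply: nH; apply/IH.
- by split=> -[Hg Hh]; split; apply/(IHg F s) || apply/(IHh F s).
- by split=> H Ha; apply/IH; apply: H.
- split=> H.
  + by move=> G HG; apply/IH; apply: H (svalP G) HG.
  + by move=> G facG HG; apply/(IH (exist _ G facG)); apply: H.
Qed.

Hypothesis HC : is_simplicial_model C chi.

Definition colours (F : V -> Prop) : {set A} := [set a | `[< img chi F a >]].

Lemma simplex_chi_inj F u v : C F -> F u -> F v -> chi u = chi v -> u = v.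
Proof. by case: HC => _ _ _ _; apply. Qed.

Lemma facet_chi_inj (F : LEMW C) u v :
  sval F u -> sval F v -> chi u = chi v -> u = v.
Proof. exact/simplex_chi_inj/(svalP F).1. Qed.

Lemma colours_proper F G v : C G -> (forall u, F u -> G u) -> G v -> ~ F v ->
  colours F \proper colours G.
Proof.
move=> CG FG Gv nFv; apply/properP; split.
  by apply/subsetP => a; rewrite !inE => /asboolP [u [Fu <-]]; apply/asboolP; exists u; auto.
exists (chi v); rewrite inE; first by apply/asboolP; exists v.
apply/asboolP => -[u [Fu chi_uv]].
by apply: nFv; rewrite (simplex_chi_inj CG Gv (FG u Fu)) ?chi_uv.
Qed.

Lemma simplex_sub_facet F : C F -> exists2 G, facet C G & forall v, F v -> G v.
Proof.
have [n] := ubnP (#|A| - #|colours F|); elim: n F => // n IHn F ltFn CF.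
case: (pselect (exists G, [/\ C G, forall v, F v -> G v & exists2 v, G v & ~ F v])).
- move=> [G [CG FG [v Gv nFv]]].
  have ltFG := proper_card (colours_proper CG FG Gv nFv).
  have leGA : #|colours G| <= #|A| := max_card _.
  have [H facH GH] := IHn G ltac:(lia) CG.
  by exists H => // u /FG /GH.
- move=> noext; exists F => //; split=> // G CG FG v Gv.
  by apply: contrapT => nFv; apply: noext; exists G; split=> //; exists v.
Qed.

Lemma LEM_nonempty : exists F : LEMW C, True.
Proof.
case: HC => [[v _] _ _ Hsing _].
by have [G facG _] := simplex_sub_facet (Hsing v); exists (exist _ G facG).
Qed.

Lemma LEMR_all_colours_sub (F G : LEMW C) :
  (forall a, LEMdelta F a -> LEMR a F G) -> forall v, sval F v -> sval G v.
Proof.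
move=> FG v Fv; have [u [[Fu Gu] chi_uv]] := FG (chi v) (ex_intro _ v (conj Fv erefl)).
by rewrite (facet_chi_inj Fv Fu (esym chi_uv)).
Qed.

Lemma LEMR_all_colours_eq (F G : LEMW C) :
  (forall a, LEMdelta F a -> LEMR a F G) -> G = F.
Proof.
move=> FG; have subFG := LEMR_all_colours_sub FG.
case: F G FG subFG => F facF [G facG] /= _ subFG; apply: eq_exist.
apply: funext => v; apply: propext; split; last exact: subFG.
exact: facF.2 _ facG.1 subFG v.
Qed.

Lemma LEM_local_epistemic : is_local_epistemic LEMdelta LEMR LEMrho.
Proof.
split.
- split; first exact: LEM_nonempty.
  + move=> F; case: HC => _ nonempty _ _ _.
    by have [v Fv] := nonempty _ (svalP F).1; exists (chi v), v.
  + by move=> a F G [u [[Fu _] <-]]; exists u.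
  + by move=> p F a [u [[Fu _] <-]]; exists u.
- move=> a; split.
  + by move=> F [u [Fu <-]]; exists u.
  + by move=> F G _ _ [u [[Fu Gu] <-]]; exists u.
  + move=> F G H _ _ _ [u [[Fu Gu] <-]] [u' [[Gu' Hu'] chi_u']].
    by rewrite (facet_chi_inj Gu Gu' (esym chi_u')) in Fu; exists u'.
- by move=> a F G [u [[_ Gu] <-]] _; exists u.
- move=> a p F G [u [[Fu Gu] <-]] [u' [[Fu' Lu'] chi_u']].
  by rewrite -(facet_chi_inj Fu Fu' (esym chi_u')) in Lu'; exists u.
- by move=> F G /LEMR_all_colours_eq ->.
Qed.

Lemma LEM_proper : is_proper LEMdelta LEMR.
Proof.
move=> F G; split; first exact: LEMR_all_colours_eq.
by move=> -> a [u [Fu <-]]; exists u.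
Qed.

End LEM.

Section SC.
Variables (A : finType) (X P : countType) (W : Type).
Variables (delta : W -> A -> Prop) (R : A -> W -> W -> Prop) (rho : P -> W -> A -> Prop).

Local Notation SCV := (SCV delta R).
Local Notation SCC := (@SCC A W delta R).
Local Notation SCchi := (@SCchi A W delta R).
Local Notation SClab := (@SClab A P W delta R rho).
Local Notation SCfacet := (@SCfacet A W delta R).

Definition SCvertex w a (dwa : delta w a) : SCV :=
  exist _ (a, R a w) (ex_intro _ w (conj dwa erefl)).

Lemma SCfacet_vertex w a (dwa : delta w a) : SCfacet w (SCvertex dwa).
Proof. by []. Qed.

Lemma img_SCfacet w a : img SCchi (SCfacet w) a <-> delta w a.
Proof. by split=> [[u [[dwu _] <-]] | dwa] //; exists (SCvertex dwa). Qed.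

Lemma SCfacet_chi_inj w u v : SCfacet w u -> SCfacet w v -> SCchi u = SCchi v -> u = v.
Proof.
case: u v => [[a S] pu] [[b T] pv]; rewrite /SCfacet /SCchi /= => -[_ eS] [_ eT] eab.
by subst b; apply: eq_exist; rewrite eS eT.
Qed.

Lemma SCfacet_nonempty : is_kripke_model delta R rho -> forall w, exists u, SCfacet w u.
Proof. by case=> _ nonempty _ _ w; have [a dwa] := nonempty w; exists (SCvertex dwa). Qed.

Hypothesis HL : is_local_epistemic delta R rho.

Lemma R_refl a w : delta w a -> R a w w.
Proof. by case: HL => _ /(_ a) [Rrefl _ _] _ _ _; apply: Rrefl. Qed.

Lemma R_class_eq a w v : delta w a -> R a w v -> R a w = R a v.
Proof.
case: HL => _ /(_ a) [_ Rsym Rtrans] Rmono _ _ dwa Rwv.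
have dva := Rmono _ _ _ Rwv dwa.
apply: funext => x; apply: propext; split=> Rx.
- have dxa := Rmono _ _ _ Rx dwa.
  exact: Rtrans dva dwa dxa (Rsym _ _ dwa dva Rwv) Rx.
- have dxa := Rmono _ _ _ Rx dva.
  exact: Rtrans dwa dva dxa Rwv Rx.
Qed.

Lemma R_iff_shared_vertex a w v :
  R a w v <-> img SCchi (fun u => SCfacet w u /\ SCfacet v u) a.
Proof.
have [[_ _ Rdelta _] _ Rmono _ _] := HL.
split=> [Rwv | [u [[[dwu Rwu] [dvu Rvu]] <-]]].
- have dwa := Rdelta _ _ _ Rwv; have dva := Rmono _ _ _ Rwv dwa.
  exists (SCvertex dwa); split=> //; split; first exact: SCfacet_vertex.
  by split=> //; apply: R_class_eq.
- by rewrite /SCchi -Rwu Rvu; apply: R_refl.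
Qed.

Lemma SCfacet_subset_sym w v :
  (forall u, SCfacet w u -> SCfacet v u) -> forall u, SCfacet v u -> SCfacet w u.
Proof.
have [_ _ _ _ Rmax] := HL; move=> wv.
have shared a (dwa : delta w a) : delta v a /\ R a w = R a v := wv _ (SCfacet_vertex dwa).
have Rwv a : delta w a -> R a w v.
  by move=> /shared [dva ->]; apply: R_refl.
move=> u [dvu Ru]; have dwu := Rmax _ _ Rwv _ dvu.
by split=> //; rewrite Ru; case: (shared _ dwu).
Qed.

Lemma facet_SCC G : facet SCC G <-> exists w, forall u, G u <-> SCfacet w u.
Proof.
have [HK _ _ _ _] := HL.
split=> [[[_ [w Gw]] Gmax] | [w Gw]].
- exists w => u; split; first exact: Gw.
  apply: Gmax => //; split; [exact: SCfacet_nonempty | by exists w].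
- have [u wu] := SCfacet_nonempty HK w.
  split; first by split; [exists u; apply/Gw | exists w => u' /Gw].
  move=> G' [_ [v G'v]] GG' u' G'u'; apply/Gw.
  by apply: SCfacet_subset_sym (G'v _ G'u') => u'' /Gw /GG' /G'v.
Qed.

Lemma facet_SCfacet w : facet SCC (SCfacet w).
Proof. by apply/facet_SCC; exists w. Qed.

Lemma ksat_SC (f : form A X P) w s :
  ksat delta R rho w s f <-> ssat SCC SCchi SClab (SCfacet w) s f.
Proof.
have [[_ _ _ rho_delta] _ _ rho_mono _] := HL.
elim: f w s => [p x || g IH | g IHg h IHh | x a g IH | xs g IH] w s //=.
- split=> [rw | [u [[[dwu Rwu] [w' [dw'u [Rw'u rw']]]] <-]]].
  + have dwx := rho_delta _ _ _ rw.
    by exists (SCvertex dwx); split; [split; [exact: SCfacet_vertex | exists w] |].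
  + have Rw'w : R (SCchi u) w' w.
      by rewrite -Rw'u Rwu; apply: R_refl.
    exact: rho_mono _ _ _ _ Rw'w rw'.
- by split=> nH H; apply: nH; apply/IH.
- by split=> -[Hg Hh]; split; apply/(IHg w s) || apply/(IHh w s).
- by split=> H /img_SCfacet wa; apply/IH; apply: H.
- split=> H.
  + move=> G /facet_SCC [v Gv] xsG.
    have eG : G = SCfacet v by apply: funext => u; apply: propext.
    by subst G; apply/IH; apply: H => y /xsG /R_iff_shared_vertex.
  + move=> v xsR; apply/IH; apply: H (facet_SCfacet v) _.
    by move=> y /xsR /R_iff_shared_vertex.
Qed.

Lemma SC_simplicial : is_simplicial_model SCC SCchi.
Proof.
have [HK _ _ _ _] := HL; have [[w0 _] _ _ _] := HK.
split.
- by have [u _] := SCfacet_nonempty HK w0; exists u.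
- by move=> S [].
- by move=> S S' [_ [w Sw]] S'S S'ne; split=> //; exists w => u /S'S /Sw.
- move=> u; split; first by exists u.
  by case: u => -[a S] [w [dwa eS]]; exists w => _ ->.
- move=> S u v [_ [w Sw]] Su Sv; exact: SCfacet_chi_inj (Sw _ Su) (Sw _ Sv).
Qed.

End SC.

Theorem proposition2 (A : finType) (X : countType) (P : countType)
  (HA : 0 < #|A|) :
  (forall (V : Type) (C : (V -> Prop) -> Prop) (chi : V -> A) (lab : P -> V -> Prop),
     is_simplicial_model C chi ->
     [/\ is_local_epistemic (@LEMdelta A V C chi) (@LEMR A V C chi) (@LEMrho A P V C chi lab),
         is_proper (@LEMdelta A V C chi) (@LEMR A V C chi) &
         forall (F : LEMW C) (alpha : form A X P), sentence alpha ->
           (ssat_sent C chi lab (sval F) alpha <->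
            ksat_sent (@LEMdelta A V C chi) (@LEMR A V C chi) (@LEMrho A P V C chi lab) F alpha)])
  /\
  (forall (W : Type) (delta : W -> A -> Prop) (R : A -> W -> W -> Prop)
          (rho : P -> W -> A -> Prop),
     is_local_epistemic delta R rho ->
     [/\ is_simplicial_model (@SCC A W delta R) (@SCchi A W delta R),
         (forall G, facet (@SCC A W delta R) G <->
                    exists w, forall u, G u <-> @SCfacet A W delta R w u) &
         forall (w : W) (alpha : form A X P), sentence alpha ->
           (ksat_sent delta R rho w alpha <->
            ssat_sent (@SCC A W delta R) (@SCchi A W delta R) (@SClab A P W delta R rho)
                      (@SCfacet A W delta R w) alpha)]).
Proof.
split=> [V C chi lab HC | W delta R rho HL].
- split; [exact: LEM_local_epistemic HC | exact: LEM_proper HC |].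
  by move=> F alpha _; split=> H s; apply/ssat_LEM.
- split; [exact: SC_simplicial HL | exact: facet_SCC HL |].
  by move=> w alpha _; split=> H s; apply/ksat_SC.
Qed.
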